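(* Let $s,t\in\mathbb{R}$ with $s\ne0$, $t\ne0$, $s^2+4t>0$, and $q=\varphi'_{s,t}/\varphi_{s,t}$. (1) If $\lvert q\rvert<1$, then $\mathrm{Exp}'_{s,t}(z)=\prod_{k=0}^\infty\Big(1+(\varphi_{s,t}-\varphi'_{s,t})\frac{\varphi_{s,t}'^{\,k}}{\varphi_{s,t}^{k+1}}z\Big)$. (2) If $\lvert q\rvert>1$, then on the disk of convergence of its series, $\mathrm{Exp}'_{s,t}(z)=\prod_{k=0}^\infty\frac{\varphi_{s,t}'^{\,k+1}}{\varphi_{s,t}'^{\,k+1}+(\varphi_{s,t}-\varphi'_{s,t})\varphi_{s,t}^{k}z}$, and this product gives the meromorphic continuation of $\mathrm{Exp}'_{s,t}$ to $\mathbb{C}$.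
   Context: $\varphi_{s,t}=\frac{s+\sqrt{s^2+4t}}{2}$, $\varphi'_{s,t}=\frac{s-\sqrt{s^2+4t}}{2}$. Generalized Fibonacci polynomials: $\{0\}_{s,t}=0$, $\{1\}_{s,t}=1$, $\{n+2\}_{s,t}=s\{n+1\}_{s,t}+t\{n\}_{s,t}$; Fibotorial $\{n\}_{s,t}!=\prod_{k=1}^n\{k\}_{s,t}$, $\{0\}_{s,t}!=1$. $\mathrm{Exp}'_{s,t}(z)=\sum_{n=0}^\infty\varphi_{s,t}'^{\,\binom n2}\frac{z^n}{\{n\}_{s,t}!}$. *)

From Stdlib Require Import Reals.
From Coquelicot Require Import Coquelicot.
Open Scope R_scope.

Definition phi (s t : R) : R := (s + sqrt (s ^ 2 + 4 * t)) / 2.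
Definition phi' (s t : R) : R := (s - sqrt (s ^ 2 + 4 * t)) / 2.

Fixpoint fibp (s t : R) (n : nat) : R :=
  match n with
  | O => 0
  | S m => match m with
           | O => 1
           | S k => s * fibp s t m + t * fibp s t k
           end
  end.

Fixpoint fibtorial (s t : R) (n : nat) : R :=
  match n with
  | O => 1
  | S m => fibtorial s t m * fibp s t (S m)
  end.

Definition binom2 (n : nat) : nat := (n * (n - 1) / 2)%nat.

(* real coefficient of z^n in Exp'_{s,t}(z) *)
Definition expcoef (s t : R) (n : nat) : R :=
  phi' s t ^ binom2 n / fibtorial s t n.

Definition expterm (s t : R) (z : C) (n : nat) : C :=
  Cmult (RtoC (expcoef s t n)) (pow_n (K := C_Ring) z n).

Fixpoint cprod (f : nat -> C) (N : nat) : C :=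
  match N with
  | O => RtoC 1
  | S m => Cmult (cprod f m) (f m)
  end.

Definition is_inf_prod (f : nat -> C) (L : C) : Prop :=
  filterlim (cprod f) eventually (locally (T := C_UniformSpace) L).

Definition factor1 (s t : R) (z : C) (k : nat) : C :=
  Cplus (RtoC 1)
    (Cmult (RtoC ((phi s t - phi' s t) * phi' s t ^ k / phi s t ^ (S k))) z).

Definition factor2 (s t : R) (z : C) (k : nat) : C :=
  Cdiv (RtoC (phi' s t ^ (S k)))
    (Cplus (RtoC (phi' s t ^ (S k)))
           (Cmult (RtoC ((phi s t - phi' s t) * phi s t ^ k)) z)).

(* the zeros of the denominators of part (2): candidate poles *)
Definition pole2 (s t : R) (k : nat) : C :=
  RtoC (- (phi' s t ^ (S k)) / ((phi s t - phi' s t) * phi s t ^ k)).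

(* With [q = phi' / phi], Binet's formula gives [{n}! = phi ^ C(n,2) (q; q)_n / (1 - q) ^ n],
   so that [Exp'(z) = sum_n q ^ C(n,2) x ^ n / (q; q)_n] with [x = (1 - q) z]: this is Euler's
   q-exponential [E_q(x)] ([big_qexp q x]).  For [|q| < 1] it satisfies
   [E_q(x) = (1 + x) E_q(q x)]; iterating gives
   [E_q(x) = prod_(k < N) (1 + q ^ k x) * E_q(q ^ N x)], and [E_q(q ^ N x) -> E_q(0) = 1].
   For [|q| > 1] put [p = 1 / q]: now [Exp'(z) = sum_n y ^ n / (p; p)_n = e_p(y)]
   ([small_qexp p y]) with [y = (1 - p) z], whose radius of convergence is [1 / |1 - p|].  The same
   telescoping argument gives [e_p(y) E_p(-y) = 1], hence [Exp' = 1 / E_p(-(1 - p) z)] on the disk.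
   The right-hand side is the reciprocal of an entire function whose zeros, the points [pole2 k],
   are simple and tend to infinity: it is the meromorphic continuation of [Exp'], and its Euler
   product is the product of part (2). *)
From Stdlib Require Import Reals Lra Lia ClassicalEpsilon.
From Coquelicot Require Import Coquelicot.
Open Scope R_scope.

Notation is_Cseries := (@is_series C_AbsRing C_NormedModule).
Notation is_Cderive := (@is_derive C_AbsRing C_NormedModule).
Notation ex_Cderive := (@ex_derive C_AbsRing C_NormedModule).
Notation Clim f F l := (filterlim f F (@locally C_UniformSpace (l : C))).

Lemma Cmod_sub_sym (x y : C) : Cmod (x - y) = Cmod (y - x).
Proof. rewrite <- Cmod_opp. f_equal. ring. Qed.

Lemma Cmod_triangle_inv (x y : C) : Cmod x - Cmod y <= Cmod (x - y).
Proof.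
  pose proof (Cmod_triangle (x - y) y) as H.
  replace (x - y + y)%C with x in H by ring. lra.
Qed.

Lemma RtoC_neq0 (r : R) : r <> 0 -> RtoC r <> 0.
Proof. intros H E. apply H. exact (RtoC_inj r 0 E). Qed.

Lemma Cmult_integral (x y : C) : (x * y)%C = 0 -> x = 0 \/ y = 0.
Proof.
  intro H. destruct (Ceq_dec x 0) as [|Hx]; auto. destruct (Ceq_dec y 0) as [|Hy]; auto.
  now destruct (Cmult_neq_0 x y Hx Hy).
Qed.

(* Rocq's [Cinv] is total with [Cinv 0 = 0], which makes [Cinv_mult] hold unconditionally. *)
Lemma Cinv_0 : Cinv 0 = 0.
Proof. apply injective_projections; simpl; unfold Rdiv; ring. Qed.

Lemma Cinv_mult (x y : C) : Cinv (x * y) = (Cinv x * Cinv y)%C.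
Proof.
  destruct (Ceq_dec x 0) as [->|Hx]. { now rewrite Cmult_0_l, Cinv_0, Cmult_0_l. }
  destruct (Ceq_dec y 0) as [->|Hy]. { now rewrite Cmult_0_r, Cinv_0, Cmult_0_r. }
  now field.
Qed.

Lemma pow_n_Cpow (z : C) n : pow_n (K := C_Ring) z n = Cpow z n.
Proof. induction n as [|n IH]; simpl; [reflexivity | now rewrite IH]. Qed.

Lemma Clim_norm {T} (F : (T -> Prop) -> Prop) {FF : Filter F} (u : T -> C) (l : C) :
  Clim u F l <-> forall eps, 0 < eps -> F (fun x => Cmod (u x - l) < eps).
Proof.
  split.
  - intros H eps He.
    exact (proj1 (filterlim_locally_ball_norm (K := C_AbsRing) (U := C_NormedModule) u l) H
             (mkposreal eps He)).
  - intro H. apply (filterlim_locally_ball_norm (K := C_AbsRing) (U := C_NormedModule)).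
    intro eps. exact (H eps (cond_pos eps)).
Qed.

Lemma Clim_unique (u : nat -> C) (l1 l2 : C) :
  Clim u eventually l1 -> Clim u eventually l2 -> l1 = l2.
Proof. apply (filterlim_locally_unique (K := C_AbsRing) (V := C_NormedModule)). Qed.

Lemma Clim_qpow_mult (q : R) (x : C) :
  Rabs q < 1 -> Clim (fun N => RtoC (q ^ N) * x)%C eventually (RtoC 0).
Proof.
  intro Hq. apply Clim_norm; [apply eventually_filter|]. intros eps He.
  assert (Hx := Cmod_ge_0 x).
  destruct (pow_lt_1_zero (Rabs q) ltac:(now rewrite Rabs_Rabsolu) (eps / (Cmod x + 1)))
    as [N HN]; [apply Rdiv_lt_0_compat; lra|].
  exists N. intros n Hn. specialize (HN n Hn).
  rewrite Rabs_pos_eq in HN by (apply pow_le, Rabs_pos).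
  replace (RtoC (q ^ n) * x - 0)%C with (RtoC (q ^ n) * x)%C by ring.
  rewrite Cmod_mult, Cmod_R, <- RPow_abs.
  assert (0 <= Rabs q ^ n) by (apply pow_le, Rabs_pos).
  apply Rle_lt_trans with (Rabs q ^ n * (Cmod x + 1)); [apply Rmult_le_compat_l; lra|].
  apply Rlt_le_trans with (eps / (Cmod x + 1) * (Cmod x + 1)); [apply Rmult_lt_compat_r; lra|].
  right. field. lra.
Qed.

Lemma Cmod_sub_1_lt_neq0 (z : C) : Cmod (z - 1) < 1 -> z <> 0.
Proof. intros H ->. replace (0 - 1)%C with (- (1))%C in H by ring. rewrite Cmod_m1 in H. lra. Qed.

Lemma Clim_id_locally' (x : C) : Clim (fun w => w) (@locally' C_UniformSpace x) x.
Proof.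
  apply Clim_norm; [apply locally'_filter|]. intros eps He.
  apply (locally_le_locally_norm (K := C_AbsRing) (V := C_NormedModule)).
  exists (mkposreal eps He). intros y Hy _. exact Hy.
Qed.

(* Coquelicot's [is_derive_mult] and [is_derive_comp] use the normed module
   [AbsRing_NormedModule C_AbsRing], which is not convertible to [C_NormedModule]. *)
Lemma is_Cderive_abs (f : C -> C) (x l : C) :
  is_derive (K := C_AbsRing) (V := AbsRing_NormedModule C_AbsRing) f x l <-> is_Cderive f x l.
Proof.
  split; intros [_ H]; (split; [apply is_linear_scal_l|]);
    intros y Hy eps; exact (H y Hy eps).
Qed.

Lemma is_Cderive_of_quadratic_remainder (f : C -> C) (x l : C) (del M : R) :
  0 < del ->
  (forall y, Cmod (y - x) < del -> Cmod (f y - f x - (y - x) * l) <= M * Cmod (y - x) ^ 2) ->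
  is_Cderive f x l.
Proof.
  intros Hdel Hrem. split; [apply is_linear_scal_l|].
  intros x' Hx'.
  apply (is_filter_lim_locally_unique (K := C_AbsRing) (V := AbsRing_NormedModule C_AbsRing))
    in Hx'.
  subst x'. intro eps.
  assert (HM := Rabs_pos M). assert (HM' := Rle_abs M).
  assert (He := cond_pos eps).
  set (d := Rmin del (eps / (Rabs M + 1))).
  assert (Hd : 0 < d) by (apply Rmin_pos; [lra | apply Rdiv_lt_0_compat; lra]).
  exists (mkposreal d Hd). intros y Hy. change C in y. change (Cmod (y - x) < d) in Hy.
  change (Cmod (f y - f x - (y - x) * l) <= eps * Cmod (y - x)).
  set (h := Cmod (y - x)) in *. assert (Hh := Cmod_ge_0 (y - x)). fold h in Hh.
  assert (Hh1 : h * (Rabs M + 1) <= eps).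
  { apply Rle_trans with (eps / (Rabs M + 1) * (Rabs M + 1)).
    - apply Rmult_le_compat_r; [lra|]. apply Rlt_le, Rlt_le_trans with d; [exact Hy | apply Rmin_r].
    - right. field. lra. }
  eapply Rle_trans; [apply Hrem, Rlt_le_trans with d; [exact Hy | apply Rmin_l]|].
  assert (0 <= (Rabs M + 1 - M) * (h * h)) by (apply Rmult_le_pos; nra).
  assert (h * (Rabs M + 1) * h <= eps * h) by (apply Rmult_le_compat_r; lra).
  fold h. simpl. nra.
Qed.

Lemma is_Cderive_Cinv (a : C) : a <> 0 -> is_Cderive Cinv a (- Cinv (a * a))%C.
Proof.
  intro Ha. assert (Hm := proj1 (Cmod_gt_0 a) Ha). set (m := Cmod a) in *.
  apply (is_Cderive_of_quadratic_remainder _ _ _ (m / 2) (2 / (m * m * m))); [lra|].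
  intros y Hy. set (h := Cmod (y - a)) in *. assert (Hh := Cmod_ge_0 (y - a)). fold h in Hh.
  assert (Hym : m / 2 <= Cmod y).
  { pose proof (Cmod_triangle_inv a y) as T. rewrite Cmod_sub_sym in T. fold m h in T. lra. }
  assert (Hy0 : y <> 0) by (intro E; rewrite E, Cmod_0 in Hym; lra).
  replace (Cinv y - Cinv a - (y - a) * - Cinv (a * a))%C with ((y - a) ^ 2 * Cinv (y * a * a))%C
    by (field; auto).
  rewrite Cmod_mult, Cmod_pow, Cmod_inv by (repeat apply Cmult_neq_0; auto).
  rewrite !Cmod_mult. fold m h.
  replace (2 / (m * m * m) * h ^ 2) with (h ^ 2 * / (m / 2 * m * m)) by (field; lra).
  apply Rmult_le_compat_l; [apply pow_le; lra|].
  apply Rinv_le_contravar; [repeat apply Rmult_lt_0_compat; lra|].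
  apply Rmult_le_compat_r; [lra|]. apply Rmult_le_compat_r; lra.
Qed.

Lemma ex_Cderive_ext (f g : C -> C) (z : C) :
  (forall w, f w = g w) -> ex_Cderive f z -> ex_Cderive g z.
Proof. apply ex_derive_ext. Qed.

Lemma ex_Cderive_affine (a b z : C) : ex_Cderive (fun w => a + b * w)%C z.
Proof.
  exists b. apply (is_Cderive_of_quadratic_remainder _ _ _ 1 0); [lra|].
  intros y _. replace (a + b * y - (a + b * z) - (y - z) * b)%C with (RtoC 0) by ring.
  rewrite Cmod_0. lra.
Qed.

Lemma ex_Cderive_mult (f g : C -> C) (z : C) :
  ex_Cderive f z -> ex_Cderive g z -> ex_Cderive (fun w => f w * g w)%C z.
Proof.
  intros [df Hf] [dg Hg]. eexists. apply is_Cderive_abs.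
  apply (is_derive_mult (K := C_AbsRing) f g z df dg);
    [apply is_Cderive_abs, Hf | apply is_Cderive_abs, Hg | apply Cmult_comm].
Qed.

Lemma ex_Cderive_comp (f g : C -> C) (z : C) :
  ex_Cderive g z -> ex_Cderive f (g z) -> ex_Cderive (fun w => f (g w)) z.
Proof.
  intros [dg Hg] [df Hf]. eexists. apply (is_derive_comp f g z df dg Hf), is_Cderive_abs, Hg.
Qed.

Lemma ex_Cderive_Cinv (f : C -> C) (z : C) :
  ex_Cderive f z -> f z <> 0 -> ex_Cderive (fun w => Cinv (f w)) z.
Proof. intros Hf Hz. apply ex_Cderive_comp; [exact Hf|]. eexists. now apply is_Cderive_Cinv. Qed.

Lemma ex_Cderive_cprod (F : C -> nat -> C) (z : C) (N : nat) :
  (forall k, ex_Cderive (fun w => F w k) z) -> ex_Cderive (fun w => cprod (F w) N) z.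
Proof.
  intro HF. induction N as [|N IH]; simpl.
  - apply ex_derive_const.
  - now apply ex_Cderive_mult.
Qed.

Lemma Clim_comp_Cderive {T} (F : (T -> Prop) -> Prop) {FF : Filter F}
  (f : C -> C) (u : T -> C) (l : C) :
  ex_Cderive f l -> Clim u F l -> Clim (fun x => f (u x)) F (f l).
Proof.
  intros Hf Hu. apply Clim_norm; [exact FF|]. intros eps He.
  destruct (proj1 (filterlim_locally_ball_norm (K := C_AbsRing) (U := C_NormedModule) f (f l))
              (ex_derive_continuous f l Hf) (mkposreal eps He)) as [del Hdel].
  apply (filter_imp (fun x => Cmod (u x - l) < del)).
  - intros x Hx. exact (Hdel (u x) Hx).
  - exact (proj1 (Clim_norm F u l) Hu del (cond_pos del)).
Qed.

Lemma Clim_scal {T} (F : (T -> Prop) -> Prop) {FF : Filter F} (k : C) (u : T -> C) (l : C) :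
  Clim u F l -> Clim (fun x => k * u x)%C F (k * l)%C.
Proof.
  apply (Clim_comp_Cderive F (fun w => k * w)%C u l).
  apply (ex_Cderive_ext (fun w => 0 + k * w)%C); [intro w; ring | apply ex_Cderive_affine].
Qed.

Definition Cseries (a : nat -> C) : C := epsilon (inhabits (RtoC 0)) (is_Cseries a).

Lemma Cseries_correct (a : nat -> C) : (exists l, is_Cseries a l) -> is_Cseries a (Cseries a).
Proof. apply epsilon_spec. Qed.

Lemma is_Cseries_unique (a : nat -> C) (l1 l2 : C) :
  is_Cseries a l1 -> is_Cseries a l2 -> l1 = l2.
Proof. apply Clim_unique. Qed.

Lemma Cmod_sum_n_le (a : nat -> C) (c : nat -> R) (N : nat) :
  (forall n, Cmod (a n) <= c n) -> Cmod (sum_n a N) <= sum_n c N.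
Proof.
  intro Hac. induction N as [|N IH].
  - rewrite !sum_O. apply Hac.
  - rewrite !sum_Sn. eapply Rle_trans; [apply Cmod_triangle|].
    change (plus (sum_n c N) (c (S N))) with (sum_n c N + c (S N)).
    specialize (Hac (S N)). lra.
Qed.

Lemma Cmod_is_Cseries_le (a : nat -> C) (c : nat -> R) (l : C) (M : R) :
  is_Cseries a l -> is_series c M -> (forall n, Cmod (a n) <= c n) -> Cmod l <= M.
Proof.
  intros Ha Hc Hac.
  assert (Hn : is_lim_seq (fun N => Cmod (sum_n a N)) (Cmod l)).
  { eapply filterlim_comp; [exact Ha|].
    apply (filterlim_norm (K := C_AbsRing) (V := C_NormedModule)). }
  exact (is_lim_seq_le _ _ (Finite (Cmod l)) (Finite M) (fun N => Cmod_sum_n_le a c N Hac) Hn Hc).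
Qed.

Lemma is_Cseries_ext (a b : nat -> C) (l : C) :
  (forall n, a n = b n) -> is_Cseries a l -> is_Cseries b l.
Proof. apply is_series_ext. Qed.

Lemma is_Cseries_plus (a b : nat -> C) (la lb : C) :
  is_Cseries a la -> is_Cseries b lb -> is_Cseries (fun n => a n + b n)%C (la + lb)%C.
Proof. apply (is_series_plus (K := C_AbsRing) (V := C_NormedModule)). Qed.

Lemma is_Cseries_minus (a b : nat -> C) (la lb : C) :
  is_Cseries a la -> is_Cseries b lb -> is_Cseries (fun n => a n - b n)%C (la - lb)%C.
Proof. apply (is_series_minus (K := C_AbsRing) (V := C_NormedModule)). Qed.

Lemma is_Cseries_scal (k : C) (a : nat -> C) (l : C) :
  is_Cseries a l -> is_Cseries (fun n => k * a n)%C (k * l)%C.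
Proof. apply (is_series_scal (K := C_AbsRing) (V := C_NormedModule)). Qed.

Lemma is_Cseries_shift (a : nat -> C) (l : C) :
  is_Cseries a l -> is_Cseries (fun n => match n with O => RtoC 0 | S m => a m end) l.
Proof.
  intro H. apply (is_series_decr_1 (K := C_AbsRing) (V := C_NormedModule)).
  match goal with |- is_series _ ?l' => replace l' with l; [exact H|] end.
  change (l = l + - RtoC 0)%C. ring.
Qed.

Definition Cpseries (a : nat -> R) (z : C) : C := Cseries (fun n => RtoC (a n) * z ^ n)%C.

Lemma is_Cpseries (a : nat -> R) (z : C) :
  Rbar_lt (Cmod z) (CV_radius a) -> is_Cseries (fun n => RtoC (a n) * z ^ n)%C (Cpseries a z).
Proof.
  intro Hz. apply Cseries_correct.
  apply (ex_series_le (K := C_AbsRing) (V := C_CompleteNormedModule)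
           _ (fun n => Rabs (a n * Cmod z ^ n))).
  - intro n. change (Cmod (RtoC (a n) * z ^ n) <= Rabs (a n * Cmod z ^ n)).
    rewrite Cmod_mult, Cmod_pow, Cmod_R, Rabs_mult, (Rabs_pos_eq (Cmod z ^ n))
      by (apply pow_le, Cmod_ge_0).
    lra.
  - apply CV_disk_inside. now rewrite Rabs_pos_eq by apply Cmod_ge_0.
Qed.

Lemma Cmod_Cpseries_sub_const_le (a : nat -> R) (r : R) (y : C) :
  0 < r -> Rbar_lt r (CV_radius a) -> Cmod y <= r ->
  Cmod (Cpseries a y - a O) <= Cmod y / r * Series (fun n => Rabs (a (S n) * r ^ S n)).
Proof.
  intros Hr Hra Hy.
  assert (Hy0 := Cmod_ge_0 y).
  assert (Hra' : Rbar_lt (Rabs r) (CV_radius a)) by now rewrite Rabs_pos_eq by lra.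
  assert (Htail : is_Cseries (fun n => RtoC (a (S n)) * y ^ S n)%C (Cpseries a y - a O)%C).
  { apply (is_series_incr_1 (K := C_AbsRing) (V := C_NormedModule) (fun n => RtoC (a n) * y ^ n)%C).
    match goal with |- is_series _ ?l => replace l with (Cpseries a y) end.
    2: { change (Cpseries a y = Cpseries a y - a O + a O * 1)%C. ring. }
    apply is_Cpseries. eapply Rbar_le_lt_trans; [|exact Hra]. exact Hy. }
  apply (Cmod_is_Cseries_le _ (fun n => Cmod y / r * Rabs (a (S n) * r ^ S n)) _ _ Htail).
  - apply (is_series_scal (K := R_AbsRing) (V := R_NormedModule)), Series_correct.
    apply (ex_series_incr_1 (K := R_AbsRing) (V := R_NormedModule) (fun n => Rabs (a n * r ^ n))).
    now apply CV_disk_inside.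
  - intro n. rewrite Cmod_mult, Cmod_pow, Cmod_R, Rabs_mult, (Rabs_pos_eq (r ^ S n))
      by (apply pow_le; lra).
    assert (Cmod y ^ n <= r ^ n) by (apply pow_incr; lra).
    assert (Hpos := Rabs_pos (a (S n))).
    replace (Cmod y / r * (Rabs (a (S n)) * r ^ S n)) with (Rabs (a (S n)) * (Cmod y * r ^ n))
      by (simpl; field; lra).
    apply Rmult_le_compat_l; [lra|]. simpl. apply Rmult_le_compat_l; lra.
Qed.

Lemma Cpseries_continuous_0 (a : nat -> R) (r : R) :
  0 < r -> Rbar_lt r (CV_radius a) -> Clim (Cpseries a) (@locally C_UniformSpace (RtoC 0)) (a O).
Proof.
  intros Hr Hra. apply Clim_norm; [apply locally_filter|]. intros eps He.
  set (K := Series (fun n => Rabs (a (S n) * r ^ S n))).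
  assert (HK := Rabs_pos K). assert (HK' := Rle_abs K).
  set (del := Rmin r (eps * r / (Rabs K + 1))).
  assert (Hdel : 0 < del) by (apply Rmin_pos; [lra | apply Rdiv_lt_0_compat; nra]).
  apply (locally_le_locally_norm (K := C_AbsRing) (V := C_NormedModule)).
  exists (mkposreal del Hdel). intros y Hy. change C in y. change (Cmod (y - 0) < del) in Hy.
  replace (y - 0)%C with y in Hy by ring.
  assert (Hy0 := Cmod_ge_0 y).
  eapply Rle_lt_trans.
  { apply Cmod_Cpseries_sub_const_le; [exact Hr | exact Hra |].
    apply Rlt_le, Rlt_le_trans with del; [exact Hy | apply Rmin_l]. }
  fold K.
  assert (Hyd : Cmod y * (Rabs K + 1) < eps * r).
  { apply Rlt_le_trans with (del * (Rabs K + 1)); [apply Rmult_lt_compat_r; lra|].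
    apply Rle_trans with (eps * r / (Rabs K + 1) * (Rabs K + 1)).
    - apply Rmult_le_compat_r; [lra | apply Rmin_r].
    - right. field. lra. }
  apply Rmult_lt_reg_r with r; [exact Hr|].
  replace (Cmod y / r * K * r) with (Cmod y * K) by (field; lra). nra.
Qed.

Lemma Cpseries_qpow_lim (a : nat -> R) (r q : R) (x : C) :
  0 < r -> Rbar_lt r (CV_radius a) -> Rabs q < 1 ->
  Clim (fun N => Cpseries a (RtoC (q ^ N) * x)) eventually (a O).
Proof.
  intros Hr Hra Hq. eapply filterlim_comp; [apply Clim_qpow_mult, Hq|].
  exact (Cpseries_continuous_0 a r Hr Hra).
Qed.

Definition Cpow_deriv (x : C) (n : nat) : C :=
  match n with O => RtoC 0 | S m => (RtoC (INR (S m)) * x ^ m)%C end.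

Lemma Cpow_deriv_S (x : C) (n : nat) : Cpow_deriv x (S n) = (RtoC (INR (S n)) * x ^ n)%C.
Proof. reflexivity. Qed.

Lemma Cmod_Cpow_deriv_le (x : C) (rho : R) (n : nat) :
  1 <= rho -> Cmod x <= rho -> Cmod (Cpow_deriv x n) <= INR n * rho ^ n.
Proof.
  intros Hrho Hx. destruct n as [|n].
  - simpl. rewrite Cmod_0. lra.
  - rewrite Cpow_deriv_S, Cmod_mult, Cmod_R, Cmod_pow, Rabs_pos_eq by apply pos_INR.
    apply Rmult_le_compat_l; [apply pos_INR|].
    apply Rle_trans with (rho ^ n); [apply pow_incr; split; [apply Cmod_ge_0 | exact Hx]|].
    simpl. rewrite <- (Rmult_1_l (rho ^ n)) at 1. apply Rmult_le_compat_r; [apply pow_le|]; lra.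
Qed.

Lemma Cpow_remainder_S (x y : C) (n : nat) :
  (y ^ S n - x ^ S n - (y - x) * Cpow_deriv x (S n))%C =
  (y * (y ^ n - x ^ n - (y - x) * Cpow_deriv x n) + (y - x) ^ 2 * Cpow_deriv x n)%C.
Proof.
  destruct n as [|n]; [simpl; ring|].
  rewrite !Cpow_deriv_S, (S_INR (S n)), RtoC_plus. simpl Cpow. ring.
Qed.

Lemma Cmod_Cpow_remainder_le (x y : C) (rho : R) (n : nat) :
  1 <= rho -> Cmod x <= rho -> Cmod y <= rho ->
  Cmod (y ^ n - x ^ n - (y - x) * Cpow_deriv x n) <= INR n ^ 2 * (Cmod (y - x) ^ 2 * rho ^ n).
Proof.
  intros Hrho Hx Hy. induction n as [|n IH].
  - simpl. replace (1 - 1 - (y - x) * 0)%C with (RtoC 0) by ring. rewrite Cmod_0. lra.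
  - rewrite Cpow_remainder_S. eapply Rle_trans; [apply Cmod_triangle|].
    rewrite !Cmod_mult, Cmod_pow.
    assert (Hd := Cmod_Cpow_deriv_le x rho n Hrho Hx).
    assert (Hh := Cmod_ge_0 (y - x)).
    assert (He := Cmod_ge_0 (y ^ n - x ^ n - (y - x) * Cpow_deriv x n)).
    set (h := Cmod (y - x)) in *. set (e := Cmod (y ^ n - x ^ n - (y - x) * Cpow_deriv x n)) in *.
    assert (Hn := pos_INR n). assert (Hrhon : 0 <= rho ^ n) by (apply pow_le; lra).
    assert (Cmod y * e <= rho * (INR n ^ 2 * (h ^ 2 * rho ^ n)))
      by (apply Rmult_le_compat; [apply Cmod_ge_0 | exact He | exact Hy | exact IH]).
    assert (h ^ 2 * Cmod (Cpow_deriv x n) <= h ^ 2 * (INR n * rho ^ n))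
      by (apply Rmult_le_compat_l; [apply pow_le|]; assumption).
    assert (h ^ 2 * INR n * rho ^ n <= h ^ 2 * INR n * (rho * rho ^ n)).
    { apply Rmult_le_compat_l; [apply Rmult_le_pos; [apply pow_le|]; assumption|].
      rewrite <- (Rmult_1_l (rho ^ n)) at 1. apply Rmult_le_compat_r; lra. }
    assert (0 <= h ^ 2 * rho * rho ^ n) by (repeat apply Rmult_le_pos; try apply pow_le; lra).
    rewrite S_INR. simpl pow in *. nra.
Qed.

Lemma INR_sq_le_pow4 (n : nat) : INR n ^ 2 <= 4 ^ n.
Proof.
  induction n as [|n IH]; [simpl; lra|]. rewrite S_INR. simpl in *.
  assert (1 <= 4 ^ n) by (apply pow_R1_Rle; lra). assert (0 <= INR n) by apply pos_INR. nra.
Qed.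

Lemma ex_series_sq_mul_pseries (a : nat -> R) (rho : R) :
  CV_radius a = p_infty -> 0 <= rho -> ex_series (fun n => Rabs (a n) * (INR n ^ 2 * rho ^ n)).
Proof.
  intros Ha Hrho.
  apply (ex_series_le (K := R_AbsRing) (V := R_CompleteNormedModule) _
           (fun n => Rabs (a n * (4 * rho) ^ n))).
  - intro n. change (Rabs (Rabs (a n) * (INR n ^ 2 * rho ^ n)) <= Rabs (a n * (4 * rho) ^ n)).
    assert (0 <= rho ^ n) by (apply pow_le; lra).
    assert (0 <= INR n ^ 2) by (apply pow_le, pos_INR).
    rewrite (Rabs_pos_eq (Rabs (a n) * _))
      by (apply Rmult_le_pos; [apply Rabs_pos | apply Rmult_le_pos; assumption]).
    rewrite Rabs_mult, (Rabs_pos_eq ((4 * rho) ^ n)), Rpow_mult_distr by (apply pow_le; lra).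
    apply Rmult_le_compat_l; [apply Rabs_pos|].
    apply Rmult_le_compat_r; [assumption | apply INR_sq_le_pow4].
  - apply CV_disk_inside. now rewrite Ha.
Qed.

Lemma ex_Cderive_Cpseries (a : nat -> R) (x : C) :
  CV_radius a = p_infty -> ex_Cderive (Cpseries a) x.
Proof.
  intro Ha. set (rho := Cmod x + 1).
  assert (Hrho : 1 <= rho) by (pose proof (Cmod_ge_0 x); unfold rho; lra).
  set (c := fun n => Rabs (a n) * (INR n ^ 2 * rho ^ n)).
  assert (Hc : ex_series c) by (apply ex_series_sq_mul_pseries; [exact Ha | lra]).
  assert (Hcd : forall n, Cmod (RtoC (a n) * Cpow_deriv x n) <= c n).
  { intro n. rewrite Cmod_mult, Cmod_R. unfold c. apply Rmult_le_compat_l; [apply Rabs_pos|].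
    eapply Rle_trans; [apply Cmod_Cpow_deriv_le; [exact Hrho | unfold rho; lra]|].
    apply Rmult_le_compat_r; [apply pow_le; lra|].
    destruct n as [|n]; [simpl; lra|].
    assert (1 <= INR (S n)) by (apply (le_INR 1); lia). set (m := INR (S n)) in *. simpl. nra. }
  set (D := Cseries (fun n => RtoC (a n) * Cpow_deriv x n)%C).
  assert (HD : is_Cseries (fun n => RtoC (a n) * Cpow_deriv x n)%C D).
  { apply Cseries_correct.
    exact (ex_series_le (K := C_AbsRing) (V := C_CompleteNormedModule) _ c Hcd Hc). }
  exists D. apply (is_Cderive_of_quadratic_remainder _ _ _ 1 (Series c)); [lra|].
  intros y Hy.
  assert (HyR : Cmod y <= rho).
  { pose proof (Cmod_triangle (y - x) x) as T. replace (y - x + x)%C with y in T by ring.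
    unfold rho. lra. }
  assert (Hrad : forall z : C, Rbar_lt (Cmod z) (CV_radius a)) by (intro; now rewrite Ha).
  apply (Cmod_is_Cseries_le
           (fun n => RtoC (a n) * y ^ n - RtoC (a n) * x ^ n
                     - (y - x) * (RtoC (a n) * Cpow_deriv x n))%C
           (fun n => c n * Cmod (y - x) ^ 2)).
  - apply is_Cseries_minus; [apply is_Cseries_minus; apply is_Cpseries, Hrad|].
    now apply is_Cseries_scal.
  - apply is_series_scal_r, Series_correct, Hc.
  - intro n.
    replace (RtoC (a n) * y ^ n - RtoC (a n) * x ^ n - (y - x) * (RtoC (a n) * Cpow_deriv x n))%C
      with (RtoC (a n) * (y ^ n - x ^ n - (y - x) * Cpow_deriv x n))%C by ring.
    rewrite Cmod_mult, Cmod_R. unfold c.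
    assert (T := Cmod_Cpow_remainder_le x y rho n Hrho ltac:(unfold rho; lra) HyR).
    eapply Rle_trans; [apply Rmult_le_compat_l; [apply Rabs_pos | exact T]|]. right. ring.
Qed.

(** * Euler's q-exponentials *)

Fixpoint qpoch (q : R) (n : nat) : R :=
  match n with O => 1 | S m => qpoch q m * (1 - q ^ S m) end.

Definition big_qexp_coef (q : R) (n : nat) : R := q ^ binom2 n / qpoch q n.
Definition small_qexp_coef (q : R) (n : nat) : R := / qpoch q n.

Definition big_qexp (q : R) : C -> C := Cpseries (big_qexp_coef q).
Definition small_qexp (q : R) : C -> C := Cpseries (small_qexp_coef q).

Definition euler_factor (q : R) (x : C) (k : nat) : C := (1 + RtoC (q ^ k) * x)%C.

Lemma binom2_S (n : nat) : binom2 (S n) = (binom2 n + n)%nat.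
Proof.
  unfold binom2. replace (S n * (S n - 1))%nat with (n * (n - 1) + n * 2)%nat.
  - now rewrite Nat.div_add by lia.
  - destruct n as [|n]; [reflexivity|]. replace (S (S n) - 1)%nat with (S n) by lia.
    replace (S n - 1)%nat with n by lia. nia.
Qed.

Lemma cprod_ext (f g : nat -> C) (N : nat) : (forall k, f k = g k) -> cprod f N = cprod g N.
Proof. intro H. induction N as [|N IH]; simpl; congruence. Qed.

Lemma cprod_eq0 (f : nat -> C) (N : nat) : cprod f N = 0 -> exists k, (k < N)%nat /\ f k = 0.
Proof.
  induction N as [|N IH]; simpl; intro H.
  - exfalso. apply (RtoC_neq0 1); [lra | exact H].
  - destruct (Cmult_integral _ _ H) as [H'|H'].
    + destruct (IH H') as [k [Hk Hf]]. exists k. split; [lia | exact Hf].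
    + exists N. split; [lia | exact H'].
Qed.

Lemma cprod_Cinv (f : nat -> C) (N : nat) : cprod (fun k => Cinv (f k)) N = Cinv (cprod f N).
Proof.
  induction N as [|N IH]; simpl.
  - apply injective_projections; simpl; field.
  - now rewrite IH, Cinv_mult.
Qed.

Section QSeries.
Variable q : R.
Hypothesis Hq : Rabs q < 1.
Hypothesis Hq0 : q <> 0.

Lemma Rabs_pow_S_lt_1 (n : nat) : Rabs (q ^ S n) < 1.
Proof.
  rewrite <- RPow_abs. assert (Hq' := Rabs_pos q).
  assert (Rabs q ^ n <= 1) by (rewrite <- (pow1 n); apply pow_incr; lra).
  simpl. nra.
Qed.

Lemma one_sub_pow_S_neq0 (n : nat) : 1 - q ^ S n <> 0.
Proof.
  intro E. assert (H := Rabs_pow_S_lt_1 n). replace (q ^ S n) with 1 in H by lra.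
  rewrite Rabs_R1 in H. lra.
Qed.

Lemma qpoch_neq0 (n : nat) : qpoch q n <> 0.
Proof.
  induction n as [|n IH]; simpl; [lra|].
  apply Rmult_integral_contrapositive_currified; [exact IH | apply one_sub_pow_S_neq0].
Qed.

Lemma is_lim_seq_one_sub_pow_S : is_lim_seq (fun n => 1 - q ^ S n) 1.
Proof.
  replace (Finite 1) with (Rbar_minus 1 0) by (simpl; f_equal; ring).
  apply is_lim_seq_minus'; [apply is_lim_seq_const|].
  apply (is_lim_seq_incr_1 (fun n => q ^ n)), is_lim_seq_geom, Hq.
Qed.

Lemma is_lim_seq_abs_div_one_sub_pow_S (a : nat -> R) (l : R) :
  is_lim_seq a l -> is_lim_seq (fun n => Rabs (a n / (1 - q ^ S n))) (Rabs l).
Proof.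
  intro Ha. replace (Finite (Rabs l)) with (Rbar_abs (l / 1)) by (simpl; f_equal; f_equal; field).
  apply is_lim_seq_abs, is_lim_seq_div'; [exact Ha | apply is_lim_seq_one_sub_pow_S | lra].
Qed.

Lemma big_qexp_coef_rec (n : nat) :
  big_qexp_coef q (S n) * (1 - q ^ S n) = big_qexp_coef q n * q ^ n.
Proof.
  unfold big_qexp_coef. rewrite binom2_S, pow_add.
  change (qpoch q (S n)) with (qpoch q n * (1 - q ^ S n)).
  assert (H1 := one_sub_pow_S_neq0 n). assert (H2 := qpoch_neq0 n).
  set (b := q ^ S n) in *. field. split; assumption.
Qed.

Lemma small_qexp_coef_rec (n : nat) :
  small_qexp_coef q (S n) * (1 - q ^ S n) = small_qexp_coef q n.
Proof.
  unfold small_qexp_coef. change (qpoch q (S n)) with (qpoch q n * (1 - q ^ S n)).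
  assert (H1 := one_sub_pow_S_neq0 n). assert (H2 := qpoch_neq0 n).
  set (b := q ^ S n) in *. field. split; assumption.
Qed.

Lemma big_qexp_coef_neq0 (n : nat) : big_qexp_coef q n <> 0.
Proof.
  unfold big_qexp_coef. apply Rmult_integral_contrapositive_currified.
  - now apply pow_nonzero.
  - apply Rinv_neq_0_compat, qpoch_neq0.
Qed.

Lemma big_qexp_coef_ratio (n : nat) :
  big_qexp_coef q (S n) / big_qexp_coef q n = q ^ n / (1 - q ^ S n).
Proof.
  assert (H := big_qexp_coef_rec n). assert (H0 := big_qexp_coef_neq0 n).
  assert (H1 := one_sub_pow_S_neq0 n). set (b := q ^ S n) in *.
  apply Rmult_eq_reg_r with (big_qexp_coef q n * (1 - b));
    [|now apply Rmult_integral_contrapositive_currified].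
  replace (big_qexp_coef q (S n) / big_qexp_coef q n * (big_qexp_coef q n * (1 - b)))
    with (big_qexp_coef q (S n) * (1 - b)) by (field; exact H0).
  rewrite H. field. exact H1.
Qed.

Lemma CV_radius_big_qexp_coef : CV_radius (big_qexp_coef q) = p_infty.
Proof.
  apply CV_radius_infinite_DAlembert; [exact big_qexp_coef_neq0|].
  apply (is_lim_seq_ext (fun n => Rabs (q ^ n / (1 - q ^ S n))));
    [intro n; now rewrite big_qexp_coef_ratio|].
  replace (Finite 0) with (Finite (Rabs 0)) by (now rewrite Rabs_R0).
  apply is_lim_seq_abs_div_one_sub_pow_S, is_lim_seq_geom, Hq.
Qed.

Lemma CV_radius_small_qexp_coef : CV_radius (small_qexp_coef q) = 1.
Proof.
  assert (Hc : forall n, small_qexp_coef q n <> 0)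
    by (intro n; apply Rinv_neq_0_compat, qpoch_neq0).
  rewrite <- Rinv_1. apply CV_radius_finite_DAlembert; [exact Hc | lra|].
  apply (is_lim_seq_ext (fun n => Rabs (1 / (1 - q ^ S n)))).
  { intro n. f_equal. rewrite <- (small_qexp_coef_rec n). field.
    split; [apply one_sub_pow_S_neq0 | exact (Hc (S n))]. }
  replace (Finite 1) with (Finite (Rabs 1)) by (now rewrite Rabs_R1).
  apply is_lim_seq_abs_div_one_sub_pow_S, is_lim_seq_const.
Qed.

Lemma big_qexp_coef_0 : big_qexp_coef q O = 1.
Proof. unfold big_qexp_coef. simpl. field. Qed.

Lemma small_qexp_coef_0 : small_qexp_coef q O = 1.
Proof. unfold small_qexp_coef. simpl. apply Rinv_1. Qed.

Lemma is_Cseries_big_qexp (x : C) :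
  is_Cseries (fun n => RtoC (big_qexp_coef q n) * x ^ n)%C (big_qexp q x).
Proof. apply is_Cpseries. now rewrite CV_radius_big_qexp_coef. Qed.

Lemma is_Cseries_small_qexp (x : C) : Cmod x < 1 ->
  is_Cseries (fun n => RtoC (small_qexp_coef q n) * x ^ n)%C (small_qexp q x).
Proof. intro Hx. apply is_Cpseries. now rewrite CV_radius_small_qexp_coef. Qed.

Lemma big_qexp_functional (x : C) : big_qexp q x = ((1 + x) * big_qexp q (RtoC q * x))%C.
Proof.
  set (u := fun n => (RtoC (big_qexp_coef q n) * (RtoC q * x) ^ n)%C).
  assert (H1 : is_Cseries u (big_qexp q (RtoC q * x))) by apply is_Cseries_big_qexp.
  assert (H2 := is_Cseries_shift _ _ (is_Cseries_scal x u _ H1)).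
  apply (is_Cseries_unique (fun n => RtoC (big_qexp_coef q n) * x ^ n)%C);
    [apply is_Cseries_big_qexp|].
  replace ((1 + x) * big_qexp q (RtoC q * x))%C
    with (big_qexp q (RtoC q * x) + x * big_qexp q (RtoC q * x))%C by ring.
  refine (is_Cseries_ext _ _ _ _ (is_Cseries_plus _ _ _ _ H1 H2)).
  intros [|n]; unfold u; [simpl; ring|].
  rewrite !Cpow_mult_l, <- !RtoC_pow.
  transitivity (RtoC (big_qexp_coef q (S n) * q ^ S n + big_qexp_coef q n * q ^ n) * x ^ S n)%C.
  - rewrite RtoC_plus, !RtoC_mult. simpl Cpow. ring.
  - rewrite <- (big_qexp_coef_rec n). f_equal. apply f_equal. ring.
Qed.

Lemma big_qexp_partial_product (x : C) (N : nat) :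
  big_qexp q x = (cprod (euler_factor q x) N * big_qexp q (RtoC (q ^ N) * x))%C.
Proof.
  induction N as [|N IH]; simpl cprod.
  - simpl pow. replace (RtoC 1 * x)%C with x by ring. ring.
  - rewrite IH, (big_qexp_functional (RtoC (q ^ N) * x)). unfold euler_factor.
    replace (RtoC q * (RtoC (q ^ N) * x))%C with (RtoC (q ^ S N) * x)%C
      by (simpl pow; rewrite RtoC_mult; ring).
    ring.
Qed.

Lemma big_qexp_qpow_lim (x : C) : Clim (fun N => big_qexp q (RtoC (q ^ N) * x)) eventually 1.
Proof.
  rewrite <- big_qexp_coef_0. apply (Cpseries_qpow_lim _ 1); [lra | | exact Hq].
  now rewrite CV_radius_big_qexp_coef.
Qed.

Lemma is_inf_prod_big_qexp (x : C) : is_inf_prod (euler_factor q x) (big_qexp q x).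
Proof.
  set (E := big_qexp q x). set (u := fun N => big_qexp q (RtoC (q ^ N) * x)).
  assert (Hu : Clim u eventually 1) by apply big_qexp_qpow_lim.
  assert (Hinv : Clim (fun N => E * Cinv (u N))%C eventually (E * Cinv 1)%C).
  { apply Clim_scal; [apply eventually_filter|].
    apply (Clim_comp_Cderive eventually Cinv u 1); [|exact Hu].
    eexists. apply is_Cderive_Cinv, RtoC_neq0. lra. }
  replace (E * Cinv 1)%C with E in Hinv by (field; apply RtoC_neq0; lra).
  unfold is_inf_prod. refine (filterlim_ext_loc _ _ _ Hinv).
  apply (filter_imp (fun N => Cmod (u N - 1) < 1));
    [|exact (proj1 (Clim_norm eventually u 1) Hu 1 Rlt_0_1)].
  intros N HN. apply Cmod_sub_1_lt_neq0 in HN.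
  unfold E. rewrite (big_qexp_partial_product x N). fold (u N). now field.
Qed.

Lemma big_qexp_eq0 (x : C) : big_qexp q x = 0 -> exists j, euler_factor q x j = 0.
Proof.
  intro H.
  destruct (proj1 (Clim_norm eventually _ 1) (big_qexp_qpow_lim x) 1 Rlt_0_1) as [N HN].
  specialize (HN N (Nat.le_refl N)). apply Cmod_sub_1_lt_neq0 in HN.
  rewrite (big_qexp_partial_product x N) in H.
  destruct (Cmult_integral _ _ H) as [H'|H']; [|contradiction].
  destruct (cprod_eq0 _ _ H') as [j [_ Hj]]. now exists j.
Qed.

Lemma ex_Cderive_big_qexp (x : C) : ex_Cderive (big_qexp q) x.
Proof. apply ex_Cderive_Cpseries, CV_radius_big_qexp_coef. Qed.

Lemma small_qexp_functional (x : C) : Cmod x < 1 ->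
  small_qexp q (RtoC q * x) = ((1 - x) * small_qexp q x)%C.
Proof.
  intro Hx.
  assert (Hqx : Cmod (RtoC q * x) < 1).
  { rewrite Cmod_mult, Cmod_R. assert (Hx0 := Cmod_ge_0 x). assert (Hq' := Rabs_pos q). nra. }
  set (u := fun n => (RtoC (small_qexp_coef q n) * x ^ n)%C).
  assert (H1 : is_Cseries u (small_qexp q x)) by now apply is_Cseries_small_qexp.
  assert (H2 := is_Cseries_shift _ _ (is_Cseries_scal x u _ H1)).
  apply (is_Cseries_unique (fun n => RtoC (small_qexp_coef q n) * (RtoC q * x) ^ n)%C);
    [now apply is_Cseries_small_qexp|].
  replace ((1 - x) * small_qexp q x)%C with (small_qexp q x - x * small_qexp q x)%C by ring.
  refine (is_Cseries_ext _ _ _ _ (is_Cseries_minus _ _ _ _ H1 H2)).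
  intros [|n]; unfold u; [simpl; ring|].
  rewrite !Cpow_mult_l, <- !RtoC_pow.
  transitivity
    (RtoC (small_qexp_coef q (S n) - small_qexp_coef q (S n) * (1 - q ^ S n)) * x ^ S n)%C.
  - rewrite small_qexp_coef_rec, RtoC_minus. simpl Cpow. ring.
  - rewrite RtoC_minus, !RtoC_mult, RtoC_minus. ring.
Qed.

Lemma small_qexp_partial_product (x : C) (N : nat) : Cmod x < 1 ->
  (small_qexp q x * cprod (euler_factor q (- x)) N)%C = small_qexp q (RtoC (q ^ N) * x).
Proof.
  intro Hx. induction N as [|N IH]; simpl cprod.
  - simpl pow. replace (RtoC 1 * x)%C with x by ring. ring.
  - assert (HN : Cmod (RtoC (q ^ N) * x) < 1).
    { rewrite Cmod_mult, Cmod_R, <- RPow_abs. assert (Hx0 := Cmod_ge_0 x).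
      assert (Rabs q ^ N <= 1)
        by (rewrite <- (pow1 N); apply pow_incr; split; [apply Rabs_pos | lra]).
      assert (0 <= Rabs q ^ N) by (apply pow_le, Rabs_pos). nra. }
    replace (RtoC (q ^ S N) * x)%C with (RtoC q * (RtoC (q ^ N) * x))%C
      by (simpl pow; rewrite RtoC_mult; ring).
    rewrite small_qexp_functional by exact HN. rewrite <- IH. unfold euler_factor. ring.
Qed.

Lemma small_qexp_mul_big_qexp (x : C) : Cmod x < 1 -> (small_qexp q x * big_qexp q (- x))%C = 1.
Proof.
  intro Hx.
  apply (Clim_unique (fun N => small_qexp q x * cprod (euler_factor q (- x)) N)%C).
  - apply Clim_scal; [apply eventually_filter | apply is_inf_prod_big_qexp].
  - apply (filterlim_ext (fun N => small_qexp q (RtoC (q ^ N) * x)));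
      [intro N; symmetry; now apply small_qexp_partial_product|].
    rewrite <- small_qexp_coef_0. apply (Cpseries_qpow_lim _ (1 / 2)); [lra | | exact Hq].
    rewrite CV_radius_small_qexp_coef. simpl. lra.
Qed.

End QSeries.

Lemma pow_inj_abs_lt_1 (q : R) (j k : nat) : Rabs q < 1 -> q <> 0 -> q ^ j = q ^ k -> j = k.
Proof.
  intros Hq Hq0.
  assert (Hlt : forall a b, (a < b)%nat -> q ^ a <> q ^ b).
  { intros a b Hab E. replace b with (a + S (b - a - 1))%nat in E by lia.
    rewrite pow_add in E.
    assert (H1 : q ^ S (b - a - 1) = 1).
    { apply Rmult_eq_reg_l with (q ^ a); [|now apply pow_nonzero]. rewrite <- E. ring. }
    assert (H2 := Rabs_pow_S_lt_1 q Hq (b - a - 1)). rewrite H1, Rabs_R1 in H2. lra. }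
  intro E. destruct (Nat.lt_total j k) as [H|[H|H]]; [now destruct (Hlt j k H) | exact H |].
  now destruct (Hlt k j H).
Qed.

(** * Generalized Fibonacci polynomials *)

Section Binet.
Variables s t : R.
Hypothesis Hdisc : 0 <= s ^ 2 + 4 * t.

Lemma sqrt_disc_sq : sqrt (s ^ 2 + 4 * t) * sqrt (s ^ 2 + 4 * t) = s ^ 2 + 4 * t.
Proof. now apply sqrt_sqrt. Qed.

Lemma phi_sq : phi s t * phi s t = s * phi s t + t.
Proof. unfold phi. pose proof sqrt_disc_sq. nra. Qed.

Lemma phi'_sq : phi' s t * phi' s t = s * phi' s t + t.
Proof. unfold phi'. pose proof sqrt_disc_sq. nra. Qed.

Lemma phi_mul_phi' : phi s t * phi' s t = - t.
Proof. unfold phi, phi'. pose proof sqrt_disc_sq. nra. Qed.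

Lemma fibp_binet (n : nat) : fibp s t n * (phi s t - phi' s t) = phi s t ^ n - phi' s t ^ n.
Proof.
  enough (H : fibp s t n * (phi s t - phi' s t) = phi s t ^ n - phi' s t ^ n /\
              fibp s t (S n) * (phi s t - phi' s t) = phi s t ^ S n - phi' s t ^ S n)
    by exact (proj1 H).
  induction n as [|n [IH1 IH2]]; [simpl; split; ring|]. split; [exact IH2|].
  change (fibp s t (S (S n))) with (s * fibp s t (S n) + t * fibp s t n).
  replace (phi s t ^ S (S n)) with ((phi s t * phi s t) * phi s t ^ n) by (simpl; ring).
  replace (phi' s t ^ S (S n)) with ((phi' s t * phi' s t) * phi' s t ^ n) by (simpl; ring).
  rewrite phi_sq, phi'_sq.
  replace ((s * fibp s t (S n) + t * fibp s t n) * (phi s t - phi' s t))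
    with (s * (fibp s t (S n) * (phi s t - phi' s t)) + t * (fibp s t n * (phi s t - phi' s t)))
    by ring.
  rewrite IH1, IH2. simpl. ring.
Qed.

Lemma fibp_binet' (n : nat) : fibp s t n * (phi' s t - phi s t) = phi' s t ^ n - phi s t ^ n.
Proof.
  replace (fibp s t n * (phi' s t - phi s t)) with (- (fibp s t n * (phi s t - phi' s t))) by ring.
  rewrite fibp_binet. ring.
Qed.

Hypothesis Ht : t <> 0.

Lemma phi_neq0 : phi s t <> 0.
Proof. intro E. pose proof phi_mul_phi' as H. rewrite E in H. lra. Qed.

Lemma phi'_neq0 : phi' s t <> 0.
Proof. intro E. pose proof phi_mul_phi' as H. rewrite E in H. lra. Qed.

End Binet.

(* [u, v] is [phi, phi'] or [phi', phi]: both satisfy the Binet formula. *)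
Section FibotorialQPoch.
Variables s t u v : R.
Hypothesis Hbinet : forall n, fibp s t n * (u - v) = u ^ n - v ^ n.
Hypothesis Hu : u <> 0.
Hypothesis Hq : Rabs (v / u) < 1.

Lemma fibp_S_qpow (n : nat) : fibp s t (S n) * (1 - v / u) = u ^ n * (1 - (v / u) ^ S n).
Proof.
  apply Rmult_eq_reg_r with u; [|exact Hu].
  replace (fibp s t (S n) * (1 - v / u) * u) with (fibp s t (S n) * (u - v)) by (field; exact Hu).
  rewrite Hbinet. unfold Rdiv. rewrite Rpow_mult_distr, pow_inv. simpl pow.
  field. split; [now apply pow_nonzero | exact Hu].
Qed.

Lemma fibtorial_qpoch (n : nat) :
  fibtorial s t n * (1 - v / u) ^ n = u ^ binom2 n * qpoch (v / u) n.
Proof.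
  induction n as [|n IH]; [simpl; ring|].
  change (fibtorial s t (S n)) with (fibtorial s t n * fibp s t (S n)).
  change (qpoch (v / u) (S n)) with (qpoch (v / u) n * (1 - (v / u) ^ S n)).
  rewrite binom2_S, pow_add.
  replace (fibtorial s t n * fibp s t (S n) * (1 - v / u) ^ S n)
    with ((fibtorial s t n * (1 - v / u) ^ n) * (fibp s t (S n) * (1 - v / u))) by (simpl; ring).
  rewrite IH, fibp_S_qpow. ring.
Qed.

Lemma fibtorial_neq0 (n : nat) : fibtorial s t n <> 0.
Proof.
  intro E. apply (Rmult_integral_contrapositive_currified (u ^ binom2 n) (qpoch (v / u) n)).
  - now apply pow_nonzero.
  - now apply qpoch_neq0.
  - now rewrite <- fibtorial_qpoch, E, Rmult_0_l.
Qed.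

Lemma pow_binom2_div_fibtorial (n : nat) :
  u ^ binom2 n / fibtorial s t n = small_qexp_coef (v / u) n * (1 - v / u) ^ n.
Proof.
  assert (H := fibtorial_qpoch n). assert (HF := fibtorial_neq0 n).
  assert (HQ := qpoch_neq0 (v / u) Hq n).
  unfold small_qexp_coef. apply Rmult_eq_reg_r with (fibtorial s t n * qpoch (v / u) n);
    [|now apply Rmult_integral_contrapositive_currified].
  replace (u ^ binom2 n / fibtorial s t n * (fibtorial s t n * qpoch (v / u) n))
    with (u ^ binom2 n * qpoch (v / u) n) by (field; exact HF).
  rewrite <- H. field. exact HQ.
Qed.

Lemma pow'_binom2_div_fibtorial (n : nat) :
  v ^ binom2 n / fibtorial s t n = big_qexp_coef (v / u) n * (1 - v / u) ^ n.
Proof.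
  replace v with (v / u * u) at 1 by (field; exact Hu).
  rewrite Rpow_mult_distr. unfold Rdiv at 1. rewrite Rmult_assoc.
  change (u ^ binom2 n * / fibtorial s t n) with (u ^ binom2 n / fibtorial s t n).
  rewrite pow_binom2_div_fibtorial. unfold big_qexp_coef, small_qexp_coef. field.
  now apply qpoch_neq0.
Qed.

End FibotorialQPoch.

(** * The case [|q| < 1] *)

Lemma expterm_scaled (s t : R) (z : C) (g : nat -> R) (k : R) :
  (forall n, expcoef s t n = g n * k ^ n) ->
  forall n, (RtoC (g n) * (RtoC k * z) ^ n)%C = expterm s t z n.
Proof.
  intros H n. symmetry. unfold expterm.
  rewrite H, pow_n_Cpow, Cpow_mult_l, RtoC_mult, RtoC_pow. ring.
Qed.


Theorem Exp'_euler_product (s t : R) :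
  t <> 0 -> 0 <= s ^ 2 + 4 * t -> Rabs (phi' s t / phi s t) < 1 ->
  forall z : C, exists L : C,
    is_Cseries (expterm s t z) L /\ is_inf_prod (factor1 s t z) L.
Proof.
  intros Ht Hdisc Hq z.
  set (q := phi' s t / phi s t) in *.
  assert (Hphi := phi_neq0 s t Hdisc Ht).
  assert (Hq0 : q <> 0) by (apply Rmult_integral_contrapositive_currified;
                            [apply phi'_neq0 | apply Rinv_neq_0_compat]; assumption).
  exists (big_qexp q (RtoC (1 - q) * z)). split.
  - refine (is_Cseries_ext _ _ _ (expterm_scaled s t z _ _ _) (is_Cseries_big_qexp q Hq Hq0 _)).
    intro n. apply pow'_binom2_div_fibtorial; [now apply fibp_binet | exact Hphi | exact Hq].
  - unfold is_inf_prod. refine (filterlim_ext _ _ _ (is_inf_prod_big_qexp q Hq Hq0 _)).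
    intro N. apply cprod_ext. intro k. unfold euler_factor, factor1.
    replace ((phi s t - phi' s t) * phi' s t ^ k / phi s t ^ S k) with (q ^ k * (1 - q)).
    + rewrite RtoC_mult. ring.
    + unfold q, Rdiv. rewrite Rpow_mult_distr, pow_inv. simpl pow.
      field. split; [now apply pow_nonzero | exact Hphi].
Qed.

Lemma Rabs_phi_div_phi'_lt_1 (s t : R) : t <> 0 -> 0 <= s ^ 2 + 4 * t ->
  Rabs (phi' s t / phi s t) > 1 -> Rabs (phi s t / phi' s t) < 1.
Proof.
  intros Ht Hdisc Hq.
  assert (H0 := phi_neq0 s t Hdisc Ht). assert (H1 := phi'_neq0 s t Hdisc Ht).
  replace (phi s t / phi' s t) with (/ (phi' s t / phi s t)) by (field; split; assumption).
  rewrite Rabs_inv, <- Rinv_1. apply Rinv_lt_contravar; lra.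
Qed.

(** * The case [|q| > 1]: meromorphic continuation *)

Lemma finite_pos_lower_bound (P : nat -> Prop) (g : nat -> R) (K : nat) :
  (forall k, P k \/ 0 < g k) -> exists eps, 0 < eps /\ forall k, (k < K)%nat -> P k \/ eps <= g k.
Proof.
  intro H. induction K as [|K [e [He Hk]]].
  - exists 1. split; [lra | intros; lia].
  - destruct (H K) as [HP|Hg].
    + exists e. split; [exact He|]. intros k Hk'.
      destruct (Nat.eq_dec k K) as [->|]; [now left | apply Hk; lia].
    + exists (Rmin e (g K)). split; [now apply Rmin_pos|]. intros k Hk'.
      destruct (Nat.eq_dec k K) as [->|]; [right; apply Rmin_r|].
      destruct (Hk k ltac:(lia)) as [|Hl]; [now left|].
      right. eapply Rle_trans; [apply Rmin_l | exact Hl].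
Qed.

Section Continuation.
Variables s t : R.
Hypothesis Ht : t <> 0.
Hypothesis Hdisc : 0 <= s ^ 2 + 4 * t.
Hypothesis Hp : Rabs (phi s t / phi' s t) < 1.

Let p := phi s t / phi' s t.
Let c := 1 - p.

Definition exp_recip (w : C) : C := big_qexp p (- (RtoC c * w)).

Lemma p_neq0 : p <> 0.
Proof.
  apply Rmult_integral_contrapositive_currified;
    [apply phi_neq0 | apply Rinv_neq_0_compat, phi'_neq0]; assumption.
Qed.

Lemma c_neq0 : c <> 0.
Proof.
  unfold c. intro E. assert (Hp1 : p = 1) by lra.
  assert (H := Hp). change (Rabs p < 1) in H. rewrite Hp1, Rabs_R1 in H. lra.
Qed.

Lemma expcoef_small_qexp_coef (n : nat) : expcoef s t n = small_qexp_coef p n * c ^ n.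
Proof.
  apply pow_binom2_div_fibtorial; [now apply fibp_binet' | apply phi'_neq0; assumption | exact Hp].
Qed.

Lemma CV_radius_expcoef : CV_radius (expcoef s t) = / Rabs c.
Proof.
  assert (Hcoef : forall n, small_qexp_coef p n <> 0)
    by (intro n; apply Rinv_neq_0_compat, qpoch_neq0, Hp).
  assert (Hc : forall n, expcoef s t n <> 0).
  { intro n. rewrite expcoef_small_qexp_coef.
    apply Rmult_integral_contrapositive_currified; [apply Hcoef | apply pow_nonzero, c_neq0]. }
  apply CV_radius_finite_DAlembert; [exact Hc | apply Rabs_pos_lt, c_neq0|].
  apply (is_lim_seq_ext (fun n => Rabs (c / (1 - p ^ S n)))).
  { intro n. f_equal. rewrite !expcoef_small_qexp_coef, <- (small_qexp_coef_rec p Hp n).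
    assert (H1 := one_sub_pow_S_neq0 p Hp n). simpl pow.
    field. repeat split; try assumption; [apply pow_nonzero, c_neq0 | apply Hcoef]. }
  apply is_lim_seq_abs_div_one_sub_pow_S, is_lim_seq_const. exact Hp.
Qed.

Lemma phi_sub_phi'_mul_pow (k : nat) :
  (phi s t - phi' s t) * phi s t ^ k = - (phi' s t ^ S k * (p ^ k * c)).
Proof.
  assert (Hphi' := phi'_neq0 s t Hdisc Ht).
  unfold c, p, Rdiv. rewrite Rpow_mult_distr, pow_inv. simpl pow.
  field; repeat split; auto using pow_nonzero.
Qed.

Lemma factor2_eq (z : C) (k : nat) : factor2 s t z k = Cinv (euler_factor p (- (RtoC c * z)) k).
Proof.
  assert (Ha : phi' s t ^ S k <> 0) by (apply pow_nonzero, phi'_neq0; assumption).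
  unfold factor2, euler_factor. rewrite phi_sub_phi'_mul_pow.
  replace (RtoC (phi' s t ^ S k) + RtoC (- (phi' s t ^ S k * (p ^ k * c))) * z)%C
    with (RtoC (phi' s t ^ S k) * (1 + RtoC (p ^ k) * - (RtoC c * z)))%C
    by (rewrite RtoC_opp, !RtoC_mult; ring).
  unfold Cdiv. rewrite Cinv_mult, Cmult_assoc, Cinv_r by now apply RtoC_neq0. ring.
Qed.

Lemma is_inf_prod_factor2 (z : C) :
  exp_recip z <> 0 -> is_inf_prod (factor2 s t z) (Cinv (exp_recip z)).
Proof.
  intro Hz. unfold is_inf_prod.
  apply (filterlim_ext (fun N => Cinv (cprod (euler_factor p (- (RtoC c * z))) N))).
  { intro N. rewrite <- cprod_Cinv. apply cprod_ext. intro k. symmetry. apply factor2_eq. }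
  apply (Clim_comp_Cderive eventually Cinv); [eexists; now apply is_Cderive_Cinv|].
  apply is_inf_prod_big_qexp; [exact Hp | exact p_neq0].
Qed.

Lemma is_series_expterm_disk (z : C) : Rbar_lt (Cmod z) (CV_radius (expcoef s t)) ->
  exp_recip z <> 0 /\ is_Cseries (expterm s t z) (Cinv (exp_recip z)).
Proof.
  rewrite CV_radius_expcoef. simpl. intro Hz.
  assert (Hcz : Cmod (RtoC c * z) < 1).
  { rewrite Cmod_mult, Cmod_R. assert (Hc := Rabs_pos_lt c c_neq0).
    apply Rmult_lt_reg_l with (/ Rabs c); [now apply Rinv_0_lt_compat|].
    rewrite <- Rmult_assoc, Rinv_l, Rmult_1_l, Rmult_1_r by lra. exact Hz. }
  assert (H1 := small_qexp_mul_big_qexp p Hp p_neq0 _ Hcz). fold (exp_recip z) in H1.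
  assert (Hne : exp_recip z <> 0).
  { intro E. rewrite E, Cmult_0_r in H1. apply (RtoC_neq0 1); [lra | now symmetry]. }
  split; [exact Hne|].
  replace (Cinv (exp_recip z)) with (small_qexp p (RtoC c * z))
    by (rewrite <- (Cmult_1_l (Cinv _)), <- H1; field; exact Hne).
  refine (is_Cseries_ext _ _ _ (expterm_scaled s t z _ _ _) (is_Cseries_small_qexp p Hp _ Hcz)).
  exact expcoef_small_qexp_coef.
Qed.

Lemma c_mul_pow_neq0 (k : nat) : c * p ^ k <> 0.
Proof.
  apply Rmult_integral_contrapositive_currified; [apply c_neq0 | apply pow_nonzero, p_neq0].
Qed.

Lemma pole2_eq (k : nat) : pole2 s t k = RtoC (/ (c * p ^ k)).
Proof.
  unfold pole2. rewrite phi_sub_phi'_mul_pow. f_equal.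
  assert (Ha : phi' s t ^ S k <> 0) by (apply pow_nonzero, phi'_neq0; assumption).
  assert (Hc := c_neq0). assert (Hpk : p ^ k <> 0) by apply pow_nonzero, p_neq0.
  field. repeat split; assumption.
Qed.

Lemma c_mul_pow_mul_pole2 (k : nat) : (RtoC c * RtoC (p ^ k) * pole2 s t k)%C = 1.
Proof.
  rewrite pole2_eq, <- !RtoC_mult. f_equal. field.
  split; [apply pow_nonzero, p_neq0 | apply c_neq0].
Qed.

Lemma euler_factor_eq0_pole2 (z : C) (j : nat) :
  euler_factor p (- (RtoC c * z)) j = 0 -> z = pole2 s t j.
Proof.
  unfold euler_factor. intro H.
  assert (Hc : RtoC c <> 0) by apply RtoC_neq0, c_neq0.
  assert (Hpj : RtoC (p ^ j) <> 0) by apply RtoC_neq0, pow_nonzero, p_neq0.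
  assert (E : (RtoC c * RtoC (p ^ j) * z)%C = (RtoC c * RtoC (p ^ j) * pole2 s t j)%C).
  { rewrite c_mul_pow_mul_pole2.
    replace (RtoC c * RtoC (p ^ j) * z)%C with (1 - (1 + RtoC (p ^ j) * - (RtoC c * z)))%C by ring.
    rewrite H. ring. }
  replace z with (Cinv (RtoC c * RtoC (p ^ j)) * (RtoC c * RtoC (p ^ j) * z))%C
    by (field; split; assumption).
  rewrite E. field. split; assumption.
Qed.

Lemma exp_recip_neq0 (z : C) : (forall k, z <> pole2 s t k) -> exp_recip z <> 0.
Proof.
  intros Hz E. destruct (big_qexp_eq0 p Hp p_neq0 _ E) as [j Hj].
  exact (Hz j (euler_factor_eq0_pole2 z j Hj)).
Qed.

Lemma ex_Cderive_exp_recip (z : C) : ex_Cderive exp_recip z.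
Proof.
  apply (ex_Cderive_ext (fun w => big_qexp p (0 + - RtoC c * w))%C);
    [intro w; unfold exp_recip; f_equal; ring|].
  apply (ex_Cderive_comp (big_qexp p)); [apply ex_Cderive_affine|].
  apply ex_Cderive_big_qexp; [exact Hp | exact p_neq0].
Qed.

Lemma pole2_inj (j k : nat) : pole2 s t j = pole2 s t k -> j = k.
Proof.
  rewrite !pole2_eq. intro E. apply RtoC_inj in E.
  apply (pow_inj_abs_lt_1 p); [exact Hp | exact p_neq0|].
  apply Rmult_eq_reg_l with c; [|exact c_neq0].
  rewrite <- (Rinv_inv (c * p ^ j)), E, Rinv_inv. reflexivity.
Qed.

Lemma Cmod_pole2_eventually_gt (M : R) :
  exists K, forall k, (K <= k)%nat -> M < Cmod (pole2 s t k).
Proof.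
  assert (Hc : 0 < Rabs c) by (apply Rabs_pos_lt, c_neq0).
  assert (HM : 0 < Rabs M + 1) by (pose proof (Rabs_pos M); lra).
  destruct (pow_lt_1_zero p Hp (/ (Rabs c * (Rabs M + 1)))) as [K HK];
    [apply Rinv_0_lt_compat, Rmult_lt_0_compat; lra|].
  exists K. intros k Hk. specialize (HK k Hk). rewrite <- RPow_abs in HK.
  assert (Hpk : 0 < Rabs p ^ k) by (apply pow_lt, Rabs_pos_lt, p_neq0).
  rewrite pole2_eq, Cmod_R, Rabs_inv, Rabs_mult, <- RPow_abs.
  apply Rle_lt_trans with (Rabs M + 1); [pose proof (Rle_abs M); lra|].
  replace (Rabs M + 1) with (/ (Rabs c * / (Rabs c * (Rabs M + 1)))) by (field; lra).
  apply Rinv_lt_contravar; [|apply Rmult_lt_compat_l; assumption].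
  repeat apply Rmult_lt_0_compat; try apply Rinv_0_lt_compat; nra.
Qed.

Lemma poles_isolated (z : C) : exists eps : R, eps > 0 /\
  forall k, pole2 s t k = z \/ Cmod (pole2 s t k - z) >= eps.
Proof.
  destruct (Cmod_pole2_eventually_gt (Cmod z + 1)) as [K HK].
  destruct (finite_pos_lower_bound (fun k => pole2 s t k = z) (fun k => Cmod (pole2 s t k - z)) K)
    as [e [He Hk]].
  { intro k. destruct (Ceq_dec (pole2 s t k) z) as [E|E]; [now left|]. right.
    apply Cmod_gt_0. intro E'. apply E, Ceq_minus, E'. }
  exists (Rmin e 1). split; [apply Rmin_pos; lra|]. intro k.
  destruct (Nat.lt_ge_cases k K) as [Hlt|Hge].
  - destruct (Hk k Hlt) as [|Hl]; [now left|]. right. apply Rle_ge.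
    eapply Rle_trans; [apply Rmin_l | exact Hl].
  - right. apply Rle_ge. eapply Rle_trans; [apply Rmin_r|].
    pose proof (HK k Hge). pose proof (Cmod_triangle_inv (pole2 s t k) z). lra.
Qed.


Definition pole_cofactor (k : nat) (w : C) : C :=
  (- RtoC (c * p ^ k) * cprod (euler_factor p (- (RtoC c * w))) k *
   big_qexp p (RtoC (p ^ S k) * - (RtoC c * w)))%C.

(* The [k]-th Euler factor of [exp_recip] is [- c p ^ k (w - pole2 k)]. *)
Lemma exp_recip_pole_factor (k : nat) (w : C) :
  exp_recip w = ((w - pole2 s t k) * pole_cofactor k w)%C.
Proof.
  unfold exp_recip, pole_cofactor.
  rewrite (big_qexp_partial_product p Hp p_neq0 _ (S k)). simpl cprod. unfold euler_factor at 2.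
  replace (RtoC 1 + RtoC (p ^ k) * - (RtoC c * w))%C
    with (- RtoC (c * p ^ k) * (w - pole2 s t k))%C.
  - ring.
  - rewrite RtoC_mult, <- (c_mul_pow_mul_pole2 k). ring.
Qed.

Lemma ex_Cderive_pole_cofactor (k : nat) (w : C) : ex_Cderive (pole_cofactor k) w.
Proof.
  unfold pole_cofactor. apply ex_Cderive_mult; [apply ex_Cderive_mult|].
  - apply ex_derive_const.
  - apply ex_Cderive_cprod. intro j. unfold euler_factor.
    apply (ex_Cderive_ext (fun w => 1 + - (RtoC (p ^ j) * RtoC c) * w)%C);
      [intro x; ring | apply ex_Cderive_affine].
  - apply (ex_Cderive_ext (fun w => big_qexp p (0 + - (RtoC (p ^ S k) * RtoC c) * w))%C);
      [intro x; f_equal; ring|].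
    apply (ex_Cderive_comp (big_qexp p)); [apply ex_Cderive_affine|].
    apply ex_Cderive_big_qexp; [exact Hp | exact p_neq0].
Qed.

Lemma pole_cofactor_neq0 (k : nat) : pole_cofactor k (pole2 s t k) <> 0.
Proof.
  unfold pole_cofactor. intro E.
  destruct (Cmult_integral _ _ E) as [E1|E1]; [destruct (Cmult_integral _ _ E1) as [E2|E2]|].
  - apply (RtoC_neq0 _ (c_mul_pow_neq0 k)).
    replace (RtoC (c * p ^ k)) with (- (- RtoC (c * p ^ k)))%C by ring. rewrite E2. ring.
  - destruct (cprod_eq0 _ _ E2) as [j [Hj Hz]].
    apply euler_factor_eq0_pole2, pole2_inj in Hz. lia.
  - replace (RtoC (p ^ S k) * - (RtoC c * pole2 s t k))%C with (RtoC (- p)) in E1.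
    + destruct (big_qexp_eq0 p Hp p_neq0 _ E1) as [j Hj]. unfold euler_factor in Hj.
      rewrite <- RtoC_mult, <- RtoC_plus in Hj. apply RtoC_inj in Hj.
      assert (Hl := Rabs_pow_S_lt_1 p Hp j).
      replace (p ^ S j) with 1 in Hl by (simpl; lra). rewrite Rabs_R1 in Hl. lra.
    + replace (RtoC (p ^ S k)) with (RtoC p * RtoC (p ^ k))%C
        by (rewrite <- RtoC_mult; reflexivity).
      replace (RtoC p * RtoC (p ^ k) * - (RtoC c * pole2 s t k))%C
        with (- RtoC p * (RtoC c * RtoC (p ^ k) * pole2 s t k))%C by ring.
      rewrite c_mul_pow_mul_pole2, RtoC_opp. ring.
Qed.

Lemma pole2_simple (k : nat) :
  Clim (fun w => pow_n (K := C_Ring) (w - pole2 s t k) 1 * Cinv (exp_recip w))%C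
    (@locally' C_UniformSpace (pole2 s t k)) (Cinv (pole_cofactor k (pole2 s t k))).
Proof.
  set (P := pole2 s t k).
  apply (filterlim_ext_loc (fun w => Cinv (pole_cofactor k w))).
  - exists (mkposreal 1 Rlt_0_1). intros w _ Hw.
    rewrite pow_n_Cpow, exp_recip_pole_factor with (k := k), Cinv_mult. fold P.
    assert (HwP : (w - P)%C <> 0) by (intro E; apply Hw, Ceq_minus, E).
    simpl Cpow. rewrite Cmult_1_r, Cmult_assoc, Cinv_r by exact HwP. ring.
  - apply (Clim_comp_Cderive _ (fun w => Cinv (pole_cofactor k w)) (fun w => w));
      [|apply Clim_id_locally'].
    apply ex_Cderive_Cinv; [apply ex_Cderive_pole_cofactor | apply pole_cofactor_neq0].
Qed.

End Continuation.

Theorem mainTheorem10 (s t : R) :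
  s <> 0 -> t <> 0 -> s ^ 2 + 4 * t > 0 ->
  (* (1) |q| < 1 *)
  (Rabs (phi' s t / phi s t) < 1 ->
     forall z : C, exists L : C,
       is_series (K := C_AbsRing) (V := C_NormedModule) (expterm s t z) L /\
       is_inf_prod (factor1 s t z) L) /\
  (* (2) |q| > 1 *)
  (Rabs (phi' s t / phi s t) > 1 ->
     (* on the disk of convergence of the series, Exp' equals the product *)
     (forall z : C, Rbar_lt (Finite (Cmod z)) (CV_radius (expcoef s t)) ->
        exists L : C,
          is_series (K := C_AbsRing) (V := C_NormedModule) (expterm s t z) L /\
          is_inf_prod (factor2 s t z) L) /\
     (* and the product gives the meromorphic continuation of Exp' to C *)
     (exists F : C -> C,
        (forall z : C, Rbar_lt (Finite (Cmod z)) (CV_radius (expcoef s t)) ->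
           is_series (K := C_AbsRing) (V := C_NormedModule) (expterm s t z) (F z)) /\
        (forall z : C, (forall k, z <> pole2 s t k) ->
           is_inf_prod (factor2 s t z) (F z)) /\
        (forall z : C, (forall k, z <> pole2 s t k) ->
           ex_derive (K := C_AbsRing) (V := C_NormedModule) F z) /\
        (forall z : C, exists eps : R, eps > 0 /\
           forall k, pole2 s t k = z \/ Cmod (Cminus (pole2 s t k) z) >= eps) /\
        (forall k : nat, exists (m : nat) (l : C),
           filterlim (fun w : C => Cmult (pow_n (K := C_Ring) (Cminus w (pole2 s t k)) m) (F w))
             (locally' (T := C_UniformSpace) (pole2 s t k))
             (locally (T := C_UniformSpace) l)))).
Proof.
  intros _ Ht Hdisc. apply Rlt_le in Hdisc. split; [now apply Exp'_euler_product|].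
  intro Hq. assert (Hp := Rabs_phi_div_phi'_lt_1 s t Ht Hdisc Hq).
  split.
  - intros z Hz. exists (Cinv (exp_recip s t z)).
    destruct (is_series_expterm_disk s t Ht Hdisc Hp z Hz) as [Hne Hser].
    split; [exact Hser | exact (is_inf_prod_factor2 s t Ht Hdisc Hp z Hne)].
  - exists (fun w => Cinv (exp_recip s t w)). repeat split.
    + intros z Hz. exact (proj2 (is_series_expterm_disk s t Ht Hdisc Hp z Hz)).
    + intros z Hz. apply (is_inf_prod_factor2 s t Ht Hdisc Hp), exp_recip_neq0, Hz; assumption.
    + intros z Hz. apply ex_Cderive_Cinv.
      * exact (ex_Cderive_exp_recip s t Ht Hdisc Hp z).
      * exact (exp_recip_neq0 s t Ht Hdisc Hp z Hz).
    + intro z. exact (poles_isolated s t Ht Hdisc Hp z).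
    + intro k. eexists 1%nat, _. exact (pole2_simple s t Ht Hdisc Hp k).
Qed.
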